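(* For all integers $n\ge0$, $0\le k\le n$, and all $\beta,\varphi\in[0,2\pi)$, $$[\mathcal D Z^{n,k}](\beta,\varphi)=\frac{2e^{i(n-2k)\varphi}}{n+1}\times\begin{cases}\cos[(n+1)(\beta-\varphi)], & n \text{ even},\\ i\sin[(n+1)(\beta-\varphi)], & n\text{ odd}.\end{cases}$$
   Context: Let $\mathbb D$ be the open unit disc in $\mathbb R^2\cong\mathbb C$ ($z=x^1+ix^2$). The scalar fan-beam Radon transform of a (complex-valued) function $a$ on $\mathbb D$ is defined for $\beta,\varphi\in[0,2\pi)$ with $\cos(\beta-\varphi)\ge0$ by $$[\mathcal D a](\beta,\varphi)=\int_0^{2\cos(\beta-\varphi)}a(\cos\beta-l\cos\varphi,\ \sin\beta-l\sin\varphi)\,dl,$$ i.e. the integral over the chord of the unit circle starting at $e^{i\beta}$ in direction $-(\cos\varphi,\sin\varphi)$; and for $\cos(\beta-\varphi)<0$ by $[\mathcal D a](\beta,\varphi)=-[\mathcal D a](\beta,\varphi+\pi)$ (angle taken mod $2\pi$). Zernike polynomials (paper's numbering), for $n\ge0$, $0\le k\le n$: $$Z^{n,k}(z,\bar z)=\sum_{s=0}^{k}\binom{k}{s}\binom{n-k}{s}z^{n-k-s}(1-z\bar z)^s(-\bar z)^{k-s}\ \ (0\le k\le [n/2]),\qquad Z^{n,k}=(-1)^n\overline{Z^{n,n-k}}\ \ ([n/2]<k\le n),$$ where $[\cdot]$ is the integer part. *)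

From Stdlib Require Import Reals List.
From Coquelicot Require Import Coquelicot.
Open Scope R_scope.

Definition binomR (n k : nat) : R :=
  if Nat.leb k n then Binomial.C n k else 0.

Definition Csum (m : nat) (f : nat -> C) : C :=
  fold_right Cplus (RtoC 0) (map f (seq 0 (S m))).

Definition Zlow (n k : nat) (z : C) : C :=
  Csum k (fun s =>
    Cmult (RtoC (binomR k s * binomR (n - k) s))
     (Cmult (Cpow z (n - k - s))
      (Cmult (Cpow (Cminus (RtoC 1) (Cmult z (Cconj z))) s)
             (Cpow (Copp (Cconj z)) (k - s))))).

Definition Zernike (n k : nat) (z : C) : C :=
  if Nat.leb k (Nat.div2 n) then Zlow n k z
  else Cmult (RtoC ((-1) ^ n)) (Cconj (Zlow n (n - k) z)).

(* integral over the chord starting at e^{i beta} in direction -(cos phi, sin phi) *)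
Definition chord_int (a : C -> C) (beta phi : R) : C :=
  RInt (V := C_R_CompleteNormedModule)
    (fun l => a (cos beta - l * cos phi, sin beta - l * sin phi)%R)
    0 (2 * cos (beta - phi)).

(* scalar fan-beam Radon transform; for cos(beta-phi) < 0 the direction
   phi+pi is used (the value only depends on phi+pi mod 2pi through cos/sin) *)
Definition fanD (a : C -> C) (beta phi : R) : C :=
  if Rle_dec 0 (cos (beta - phi)) then chord_int a beta phi
  else Copp (chord_int a beta (phi + PI)).

Definition Cexpi (t : R) : C := (cos t, sin t).

(* Along the chord, write z = e^{iφ}(w - l) with w = e^{i(β-φ)} and put a = w - l,
   b = l - conj w, u = 1 + a b.  Then -conj z = e^{-iφ} b and 1 - z conj z = u, so for
   2k <= n the Zernike polynomial restricted to the chord is e^{i(n-2k)φ} F_k(l) with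
   F_k = Σ_s C(k,s) C(n-k,s) a^(n-k-s) b^(k-s) u^s.  The endpoints l = 0 and
   l = 2cos(β-φ) lie on the unit circle, where u vanishes.  Each difference F_k - F_(k-1)
   is the derivative of an explicit polynomial carrying a factor u, so every F_k has
   the integral of F_0 = a^n, namely (w^(n+1) - (-conj w)^(n+1))/(n+1), which is
   2cos((n+1)(β-φ))/(n+1) or 2i sin((n+1)(β-φ))/(n+1) according to the parity of n.
   The case k > n/2 follows by complex conjugation, and cos(β-φ) < 0 by reversing
   the chord. *)

From Stdlib Require Import Reals ZArith.
From Coquelicot Require Import Coquelicot.
From Stdlib Require Import Lia List.
Open Scope R_scope.

Lemma is_derive_C_eq (f : R -> C) x (d d' : C) :
  is_derive f x d -> d = d' -> is_derive f x d'.
Proof. intros H <-; exact H. Qed.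

Lemma is_derive_Re (f : R -> C) x (d : C) :
  is_derive f x d -> is_derive (fun t => Re (f t)) x (Re d).
Proof.
  intros Hf. apply (filterdiff_comp' (U := R_NormedModule) (V := C_R_NormedModule)
    (W := R_NormedModule) f fst x _ fst Hf (filterdiff_linear _ is_linear_fst)).
Qed.

Lemma is_derive_Im (f : R -> C) x (d : C) :
  is_derive f x d -> is_derive (fun t => Im (f t)) x (Im d).
Proof.
  intros Hf. apply (filterdiff_comp' (U := R_NormedModule) (V := C_R_NormedModule)
    (W := R_NormedModule) f snd x _ snd Hf (filterdiff_linear _ is_linear_snd)).
Qed.

Lemma is_derive_Re_Im (f : R -> C) x (d : C) :
  is_derive (fun t => Re (f t)) x (Re d) -> is_derive (fun t => Im (f t)) x (Im d) ->
  is_derive f x d.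
Proof.
  intros Hre Him.
  pose proof (is_derive_plus (V := C_R_NormedModule) _ _ x _ _
    (is_derive_scal_l _ x _ (RtoC 1) Hre) (is_derive_scal_l _ x _ Ci Him)) as H.
  assert (Hsplit : forall z : C,
             plus (G := C_R_NormedModule) (scal (Re z) (RtoC 1)) (scal (Im z) Ci) = z).
  { intros [p q]. rewrite !scal_R_Cmult.
    apply injective_projections; simpl; unfold plus; simpl; ring. }
  rewrite Hsplit in H. eapply is_derive_ext; [intros t; apply Hsplit | exact H].
Qed.

Lemma is_derive_Cmult (f g : R -> C) x (df dg : C) :
  is_derive f x df -> is_derive g x dg ->
  is_derive (fun t => f t * g t)%C x (df * g x + f x * dg)%C.
Proof.
  intros Hf Hg.
  pose proof (is_derive_Re _ _ _ Hf) as Hf1. pose proof (is_derive_Im _ _ _ Hf) as Hf2.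
  pose proof (is_derive_Re _ _ _ Hg) as Hg1. pose proof (is_derive_Im _ _ _ Hg) as Hg2.
  apply is_derive_Re_Im.
  - apply (is_derive_ext (fun t => Re (f t) * Re (g t) - Im (f t) * Im (g t))).
    { intros t. destruct (f t), (g t); reflexivity. }
    replace (Re _) with (Re df * Re (g x) + Re (f x) * Re dg
                         - (Im df * Im (g x) + Im (f x) * Im dg))
      by (destruct df, dg, (f x), (g x); simpl; ring).
    apply (is_derive_minus (K := R_AbsRing)
             (fun t => Re (f t) * Re (g t)) (fun t => Im (f t) * Im (g t)));
      apply (is_derive_mult (K := R_AbsRing)); auto; exact Rmult_comm.
  - apply (is_derive_ext (fun t => Re (f t) * Im (g t) + Im (f t) * Re (g t))).
    { intros t. destruct (f t), (g t); reflexivity. }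
    replace (Im _) with (Re df * Im (g x) + Re (f x) * Im dg
                         + (Im df * Re (g x) + Im (f x) * Re dg))
      by (destruct df, dg, (f x), (g x); simpl; ring).
    apply (is_derive_plus (K := R_AbsRing)
             (fun t => Re (f t) * Im (g t)) (fun t => Im (f t) * Re (g t)));
      apply (is_derive_mult (K := R_AbsRing)); auto; exact Rmult_comm.
Qed.

Lemma is_derive_Cplus (f g : R -> C) x (df dg : C) :
  is_derive f x df -> is_derive g x dg -> is_derive (fun t => f t + g t)%C x (df + dg)%C.
Proof. exact (is_derive_plus (V := C_R_NormedModule) f g x df dg). Qed.

Lemma is_derive_Cminus (f g : R -> C) x (df dg : C) :
  is_derive f x df -> is_derive g x dg -> is_derive (fun t => f t - g t)%C x (df - dg)%C.
Proof. exact (is_derive_minus (V := C_R_NormedModule) f g x df dg). Qed.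

Lemma is_derive_Cconst (c : C) x : is_derive (fun _ : R => c) x (RtoC 0).
Proof. exact (is_derive_const (V := C_R_NormedModule) c x). Qed.

Lemma is_derive_RtoC x : is_derive RtoC x (RtoC 1).
Proof.
  apply is_derive_Re_Im;
    [apply (is_derive_id (K := R_AbsRing)) | apply (is_derive_const (K := R_AbsRing) 0)].
Qed.

Lemma is_derive_Cmult_l (c : C) (f : R -> C) x (df : C) :
  is_derive f x df -> is_derive (fun t => c * f t)%C x (c * df)%C.
Proof.
  intros Hf.
  eapply is_derive_C_eq; [exact (is_derive_Cmult _ _ x _ _ (is_derive_Cconst c x) Hf)|].
  cbv beta. ring.
Qed.

Lemma is_derive_Cpow (f : R -> C) x (df : C) n :
  is_derive f x df -> is_derive (fun t => f t ^ n)%C x (INR n * f x ^ (n - 1) * df)%C.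
Proof.
  intros Hf. induction n as [|n IHn].
  - replace (INR 0 * _ * df)%C with (RtoC 0) by (change (INR 0) with 0; ring).
    exact (is_derive_ext (K := R_AbsRing) (fun _ => RtoC 1) _ x _ (fun t => eq_refl)
             (is_derive_Cconst _ x)).
  - eapply is_derive_C_eq; [exact (is_derive_Cmult _ _ x _ _ Hf IHn)|].
    rewrite S_INR, RtoC_plus. destruct n as [|n].
    + change (INR 0) with 0. cbn [Nat.sub Cpow]. ring.
    + cbn [Nat.sub]. rewrite Nat.sub_0_r, Cpow_S. ring.
Qed.

Lemma is_RInt_C_eq (f : R -> C) a b (I I' : C) : is_RInt f a b I -> I = I' -> is_RInt f a b I'.
Proof. intros H <-; exact H. Qed.

Lemma is_RInt_Cmult_l (c : C) (f : R -> C) a b (I : C) :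
  is_RInt f a b I -> is_RInt (fun t => c * f t)%C a b (c * I)%C.
Proof.
  intros H.
  pose proof (is_RInt_fct_extend_fst (U := R_NormedModule) (V := R_NormedModule) f a b I H)
    as Hre.
  pose proof (is_RInt_fct_extend_snd (U := R_NormedModule) (V := R_NormedModule) f a b I H)
    as Him.
  destruct c as [p q].
  exact (is_RInt_fct_extend_pair (U := R_NormedModule) (V := R_NormedModule)
    (fun t => (p, q) * f t)%C a b _ _
    (is_RInt_minus _ _ _ _ _ _ (is_RInt_scal _ _ _ p _ Hre) (is_RInt_scal _ _ _ q _ Him))
    (is_RInt_plus _ _ _ _ _ _ (is_RInt_scal _ _ _ p _ Him) (is_RInt_scal _ _ _ q _ Hre))).
Qed.

Lemma is_RInt_Cconj (f : R -> C) a b (I : C) :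
  is_RInt f a b I -> is_RInt (fun t => Cconj (f t)) a b (Cconj I).
Proof.
  intros H.
  pose proof (is_RInt_fct_extend_fst (U := R_NormedModule) (V := R_NormedModule) f a b I H)
    as Hre.
  pose proof (is_RInt_fct_extend_snd (U := R_NormedModule) (V := R_NormedModule) f a b I H)
    as Him.
  exact (is_RInt_fct_extend_pair (U := R_NormedModule) (V := R_NormedModule)
    (fun t => Cconj (f t)) a b _ _ Hre (is_RInt_opp _ _ _ _ Him)).
Qed.

Lemma is_RInt_C_diff_0 (f g : R -> C) a b (I : C) :
  is_RInt f a b I -> is_RInt (fun t => g t - f t)%C a b (RtoC 0) -> is_RInt g a b I.
Proof.
  intros Hf Hd. eapply is_RInt_C_eq.
  - apply (is_RInt_ext (V := C_R_NormedModule) (fun t => f t + (g t - f t))%C).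
    (* the equation is stated in the normed-module carrier, which [ring] does not know *)
    + intros t _. match goal with |- ?x = ?y => change (@eq C x y) end. ring.
    + exact (is_RInt_plus (V := C_R_NormedModule) _ _ _ _ _ _ Hf Hd).
  - change plus with Cplus. ring.
Qed.

Lemma Csum_0 f : Csum 0 f = f 0%nat.
Proof. unfold Csum; simpl; ring. Qed.

Lemma Csum_S m f : Csum (S m) f = (Csum m f + f (S m))%C.
Proof.
  assert (Hacc : forall l x, fold_right Cplus x l = (fold_right Cplus (RtoC 0) l + x)%C)
    by (intros l x; induction l as [|y l IHl]; simpl; [|rewrite IHl]; ring).
  unfold Csum. rewrite (seq_S (S m) 0), map_app, fold_right_app. simpl.
  rewrite Hacc. ring.
Qed.

Lemma Csum_ext m f g : (forall s, (s <= m)%nat -> f s = g s) -> Csum m f = Csum m g.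
Proof.
  induction m as [|m IHm]; intros H.
  - rewrite !Csum_0. apply H; lia.
  - rewrite !Csum_S, IHm by (intros; apply H; lia). rewrite H by lia. reflexivity.
Qed.

Lemma Csum_plus m f g : Csum m (fun s => f s + g s)%C = (Csum m f + Csum m g)%C.
Proof. induction m as [|m IHm]; [rewrite !Csum_0 | rewrite !Csum_S, IHm]; ring. Qed.

Lemma Csum_minus m f g : Csum m (fun s => f s - g s)%C = (Csum m f - Csum m g)%C.
Proof. induction m as [|m IHm]; [rewrite !Csum_0 | rewrite !Csum_S, IHm]; ring. Qed.

Lemma Csum_mult_l m c f : Csum m (fun s => c * f s)%C = (c * Csum m f)%C.
Proof. induction m as [|m IHm]; [rewrite !Csum_0 | rewrite !Csum_S, IHm]; ring. Qed.

Lemma Csum_eq_0 m f : (forall s, (s <= m)%nat -> f s = RtoC 0) -> Csum m f = RtoC 0.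
Proof.
  intros H. rewrite (Csum_ext m f (fun _ => RtoC 0)) by exact H. clear H.
  induction m as [|m IHm]; [rewrite Csum_0 | rewrite Csum_S, IHm]; ring.
Qed.

Lemma Csum_shift m f : f 0%nat = RtoC 0 -> f (S m) = RtoC 0 ->
  Csum m (fun s => f (S s)) = Csum m f.
Proof.
  intros H0 Hm.
  assert (Hsh : forall p, Csum p (fun s => f (S s)) = (Csum p f - f 0%nat + f (S p))%C).
  { induction p as [|p IHp]; [rewrite !Csum_0 | rewrite !Csum_S, IHp]; ring. }
  rewrite Hsh, H0, Hm. ring.
Qed.

Lemma is_derive_Csum m (F : nat -> R -> C) (dF : nat -> C) x :
  (forall s, (s <= m)%nat -> is_derive (F s) x (dF s)) ->
  is_derive (fun t => Csum m (fun s => F s t)) x (Csum m dF).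
Proof.
  induction m as [|m IHm]; intros H.
  - rewrite Csum_0.
    apply (is_derive_ext (K := R_AbsRing) (F 0%nat));
      [intros t; rewrite Csum_0; reflexivity | apply H; lia].
  - rewrite Csum_S.
    apply (is_derive_ext (K := R_AbsRing) (fun t => Csum m (fun s => F s t) + F (S m) t)%C);
      [intros t; rewrite Csum_S; reflexivity|].
    apply is_derive_Cplus; [apply IHm; intros; apply H; lia | apply H; lia].
Qed.

Lemma binomR_gt n k : (n < k)%nat -> binomR n k = 0.
Proof. intros H. unfold binomR. destruct (Nat.leb_spec k n); [lia | reflexivity]. Qed.

Lemma binomR_diag n : binomR n n = 1.
Proof.
  unfold binomR, Binomial.C. rewrite Nat.leb_refl, Nat.sub_diag. simpl fact.
  change (INR 1) with 1. field. apply INR_fact_neq_0.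
Qed.

Lemma binomR_n0 n : binomR n 0 = 1.
Proof.
  unfold binomR, Binomial.C. cbn [Nat.leb fact]. rewrite Nat.sub_0_r. change (INR 1) with 1.
  field. apply INR_fact_neq_0.
Qed.

Lemma binomR_succ_r n s : INR (S s) * binomR n (S s) = INR (n - s) * binomR n s.
Proof.
  destruct (Nat.lt_ge_cases s n) as [Hlt | Hge].
  - unfold binomR. rewrite (proj2 (Nat.leb_le _ _) Hlt), (proj2 (Nat.leb_le s n)) by lia.
    rewrite pascal_step3 by exact Hlt. field. apply not_0_INR. lia.
  - rewrite binomR_gt by lia. replace (n - s)%nat with 0%nat by lia. simpl. ring.
Qed.

Lemma binomR_pascal n s : binomR n s + binomR n (S s) = binomR (S n) (S s).
Proof.
  destruct (lt_eq_lt_dec s n) as [[Hlt | ->] | Hgt].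
  - unfold binomR. rewrite (proj2 (Nat.leb_le _ _) Hlt), !(proj2 (Nat.leb_le _ _)) by lia.
    apply pascal. exact Hlt.
  - rewrite (binomR_gt n (S n)), !binomR_diag by lia. ring.
  - rewrite !binomR_gt by lia. ring.
Qed.

(** * Polynomials along a chord *)

Definition chord_a (w : C) (t : R) : C := (w - t)%C.
Definition chord_b (w : C) (t : R) : C := (t - Cconj w)%C.
Definition chord_u (w : C) (t : R) : C := (1 + chord_a w t * chord_b w t)%C.
Definition chord_mono (w : C) (p q r : nat) (t : R) : C :=
  (chord_a w t ^ p * chord_b w t ^ q * chord_u w t ^ r)%C.

Lemma is_derive_chord_a w t : is_derive (chord_a w) t (- RtoC 1)%C.
Proof.
  eapply is_derive_C_eq;
    [exact (is_derive_Cminus _ _ t _ _ (is_derive_Cconst w t) (is_derive_RtoC t))|].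
  apply injective_projections; simpl; ring.
Qed.

Lemma is_derive_chord_b w t : is_derive (chord_b w) t (RtoC 1).
Proof.
  eapply is_derive_C_eq;
    [exact (is_derive_Cminus _ _ t _ _ (is_derive_RtoC t) (is_derive_Cconst (Cconj w) t))|].
  apply injective_projections; simpl; ring.
Qed.

Lemma is_derive_chord_u w t : is_derive (chord_u w) t (chord_a w t - chord_b w t)%C.
Proof.
  eapply is_derive_C_eq; [exact (is_derive_Cplus _ _ t _ _ (is_derive_Cconst (RtoC 1) t)
    (is_derive_Cmult _ _ t _ _ (is_derive_chord_a w t) (is_derive_chord_b w t)))|].
  ring.
Qed.

Lemma is_derive_chord_mono w p q r t :
  is_derive (chord_mono w p q r) t
    (- INR p * chord_mono w (p - 1) q r t + INR q * chord_mono w p (q - 1) r t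
     + INR r * (chord_mono w (S p) q (r - 1) t - chord_mono w p (S q) (r - 1) t))%C.
Proof.
  eapply is_derive_C_eq; [exact (is_derive_Cmult _ _ t _ _
    (is_derive_Cmult _ _ t _ _ (is_derive_Cpow _ t _ p (is_derive_chord_a w t))
                               (is_derive_Cpow _ t _ q (is_derive_chord_b w t)))
    (is_derive_Cpow _ t _ r (is_derive_chord_u w t)))|].
  unfold chord_mono.
  destruct p, q, r; cbn [Nat.sub Cpow]; rewrite ?Nat.sub_0_r; change (INR 0) with 0; ring.
Qed.

Definition zern_term (n k : nat) (w : C) (s : nat) (t : R) : C :=
  chord_mono w (n - k - s) (k - s) s t.

Definition zern_chord (n k : nat) (w : C) (t : R) : C :=
  Csum k (fun s => RtoC (binomR k s * binomR (n - k) s) * zern_term n k w s t)%C.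

(* [zern_corr n j w] is an antiderivative of [zern_chord n j w - zern_chord n (j - 1) w]
   (this is what the two recurrences below express); since [corr_coef n j 0 = 0], each
   of its terms carries a factor [chord_u w]. *)
Definition corr_coef (n j s : nat) : R :=
  match s with
  | O => 0
  | S s' => - (binomR (j - 1) s' * binomR (n - j) s') / INR (S s')
  end.

Definition zern_corr (n j : nat) (w : C) (t : R) : C :=
  Csum j (fun s => RtoC (corr_coef n j s) * zern_term (S n) j w s t)%C.

Lemma corr_coef_succ n j s :
  INR (S s) * corr_coef n j (S s) = - (binomR (j - 1) s * binomR (n - j) s).
Proof. unfold corr_coef. field. apply not_0_INR. lia. Qed.

Lemma corr_coef_succ_diag n j : (1 <= j)%nat -> corr_coef n j (S j) = 0.
Proof.
  intros Hj. unfold corr_coef. rewrite (binomR_gt (j - 1) j) by lia.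
  field. apply not_0_INR. lia.
Qed.

Lemma corr_coef_recurrence_l n j s : (1 <= j)%nat ->
  INR (S (n - j) - s) * corr_coef n j s + INR (S s) * corr_coef n j (S s)
  = - (binomR j s * binomR (n - j) s).
Proof.
  intros Hj. rewrite corr_coef_succ.
  destruct s as [|s].
  - simpl corr_coef. rewrite !binomR_n0. ring.
  - replace (S (n - j) - S s)%nat with (n - j - s)%nat by lia.
    replace (INR (n - j - s) * corr_coef n j (S s))
      with (- (binomR (j - 1) s * (INR (n - j - s) * binomR (n - j) s)) / INR (S s))
      by (unfold corr_coef; field; apply not_0_INR; lia).
    assert (Hpascal : binomR j (S s) = binomR (j - 1) s + binomR (j - 1) (S s))
      by (rewrite binomR_pascal; f_equal; lia).
    rewrite <- binomR_succ_r, Hpascal. field. apply not_0_INR. lia.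
Qed.

Lemma corr_coef_recurrence_r n j s :
  INR (j - s) * corr_coef n j s + INR (S s) * corr_coef n j (S s)
  = - (binomR (j - 1) s * binomR (S (n - j)) s).
Proof.
  rewrite corr_coef_succ.
  destruct s as [|s].
  - simpl corr_coef. rewrite !binomR_n0. ring.
  - replace (j - S s)%nat with (j - 1 - s)%nat by lia.
    replace (INR (j - 1 - s) * corr_coef n j (S s))
      with (- (INR (j - 1 - s) * binomR (j - 1) s * binomR (n - j) s) / INR (S s))
      by (unfold corr_coef; field; apply not_0_INR; lia).
    rewrite <- binomR_succ_r, <- binomR_pascal. field. apply not_0_INR. lia.
Qed.

Lemma zern_chord_Csum_le n k m w t : (k <= m)%nat ->
  zern_chord n k w t
  = Csum m (fun s => RtoC (binomR k s * binomR (n - k) s) * zern_term n k w s t)%C.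
Proof.
  induction m as [|m IHm]; intros Hkm.
  - replace k with 0%nat by lia. reflexivity.
  - destruct (Nat.eq_dec k (S m)) as [-> | Hne]; [reflexivity|].
    rewrite Csum_S, <- IHm, (binomR_gt k (S m)) by lia.
    rewrite Rmult_0_l, Cmult_0_l, Cplus_0_r. reflexivity.
Qed.

Lemma is_derive_zern_term_succ n j w s t :
  (1 <= j)%nat -> (s <= j)%nat -> (j + s <= n)%nat ->
  is_derive (zern_term (S n) j w s) t
    (- INR (S (n - j) - s) * zern_term n j w s t + INR (j - s) * zern_term n (j - 1) w s t
     + INR s * (zern_term n (j - 1) w (s - 1) t - zern_term n j w (s - 1) t))%C.
Proof.
  intros Hj Hsj Hjs.
  eapply is_derive_C_eq; [apply is_derive_chord_mono|]. unfold zern_term.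
  replace (S n - j - s)%nat with (S (n - j) - s)%nat by lia.
  replace (S (n - j) - s - 1)%nat with (n - j - s)%nat by lia.
  replace (n - (j - 1) - s)%nat with (S (n - j) - s)%nat by lia.
  replace (j - s - 1)%nat with (j - 1 - s)%nat by lia.
  destruct s as [|s].
  - change (INR 0) with 0. ring.
  - cbn [Nat.sub]. rewrite Nat.sub_0_r.
    replace (S (n - j - s)) with (n - (j - 1) - s)%nat by lia.
    replace (j - S s)%nat with (j - 1 - s)%nat by lia.
    replace (S (j - 1 - s)) with (j - s)%nat by lia.
    ring.
Qed.

Lemma is_derive_zern_corr n j w t : (1 <= j)%nat -> (2 * j <= n)%nat ->
  is_derive (zern_corr n j w) t (zern_chord n j w t - zern_chord n (j - 1) w t)%C.
Proof.
  intros Hj Hjn.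
  set (c := corr_coef n j).
  set (P s := (c s * (- INR (S (n - j) - s) * zern_term n j w s t
                      + INR (j - s) * zern_term n (j - 1) w s t))%C).
  set (Q s := (c s * (INR s * (zern_term n (j - 1) w (s - 1) t
                               - zern_term n j w (s - 1) t)))%C).
  eapply is_derive_C_eq.
  { apply (is_derive_Csum j (fun s t => RtoC (c s) * zern_term (S n) j w s t)%C).
    intros s Hs. apply is_derive_Cmult_l, is_derive_zern_term_succ; lia. }
  rewrite (Csum_ext j _ (fun s => P s + Q s)%C) by (intros s Hs; unfold P, Q; ring).
  rewrite Csum_plus, <- (Csum_shift j Q).
  2:{ unfold Q. change (INR 0) with 0. ring. }
  2:{ unfold Q, c. rewrite corr_coef_succ_diag by exact Hj. ring. }
  rewrite <- Csum_plus, (zern_chord_Csum_le n (j - 1) j) by lia.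
  unfold zern_chord. rewrite <- Csum_minus. apply Csum_ext. intros s Hs.
  unfold P, Q. rewrite Nat.sub_succ, Nat.sub_0_r.
  replace (n - (j - 1))%nat with (S (n - j)) by lia.
  assert (E1 : binomR j s * binomR (n - j) s
                = - (INR (S (n - j) - s) * c s + INR (S s) * c (S s)))
    by (unfold c; rewrite corr_coef_recurrence_l by exact Hj; ring).
  assert (E2 : binomR (j - 1) s * binomR (S (n - j)) s
                = - (INR (j - s) * c s + INR (S s) * c (S s)))
    by (unfold c; rewrite corr_coef_recurrence_r; ring).
  rewrite E1, E2, !RtoC_opp, !RtoC_plus, !RtoC_mult. ring.
Qed.

Lemma continuous_zern_chord n k w t : continuous (zern_chord n k w) t.
Proof.
  apply (ex_derive_continuous (K := R_AbsRing) (V := C_R_NormedModule)). eexists.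
  apply (is_derive_Csum k
    (fun s t => RtoC (binomR k s * binomR (n - k) s) * zern_term n k w s t)%C).
  intros s _. apply is_derive_Cmult_l, is_derive_chord_mono.
Qed.

Lemma zern_chord_0 n w t : zern_chord n 0 w t = (chord_a w t ^ n)%C.
Proof.
  unfold zern_chord, zern_term, chord_mono. rewrite Csum_0, !binomR_n0, !Nat.sub_0_r.
  simpl. rewrite Rmult_1_l. ring.
Qed.

Lemma zern_corr_eq_0 n j w t : chord_u w t = RtoC 0 -> zern_corr n j w t = RtoC 0.
Proof.
  intros Hu. apply Csum_eq_0. intros [|s] _.
  - simpl corr_coef. ring.
  - unfold zern_term, chord_mono. rewrite Hu, Cpow_S. ring.
Qed.

Lemma is_RInt_zern_chord_0 n w a b :
  is_RInt (zern_chord n 0 w) a b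
    (RtoC (/ INR (S n)) * (chord_a w a ^ S n - chord_a w b ^ S n))%C.
Proof.
  eapply is_RInt_C_eq.
  - apply (is_RInt_derive (V := C_R_CompleteNormedModule)
      (fun t => - RtoC (/ INR (S n)) * chord_a w t ^ S n)%C); intros t _.
    + eapply is_derive_C_eq; [exact (is_derive_Cmult_l _ _ t _
        (is_derive_Cpow _ t _ (S n) (is_derive_chord_a w t)))|].
      rewrite zern_chord_0, Nat.sub_succ, Nat.sub_0_r.
      transitivity (RtoC (/ INR (S n) * INR (S n)) * chord_a w t ^ n)%C.
      * rewrite RtoC_mult. ring.
      * rewrite Rinv_l by (apply not_0_INR; lia). ring.
    + apply continuous_zern_chord.
  - change minus with Cminus. ring.
Qed.

Lemma is_RInt_zern_chord_diff n k w a b : (2 * S k <= n)%nat ->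
  chord_u w a = RtoC 0 -> chord_u w b = RtoC 0 ->
  is_RInt (fun t => zern_chord n (S k) w t - zern_chord n k w t)%C a b (RtoC 0).
Proof.
  intros Hk Ha Hb. eapply is_RInt_C_eq.
  - apply (is_RInt_derive (V := C_R_CompleteNormedModule) (zern_corr n (S k) w)); intros t _.
    + eapply is_derive_C_eq; [apply is_derive_zern_corr; lia|].
      rewrite Nat.sub_succ, Nat.sub_0_r. reflexivity.
    + apply (continuous_minus (V := C_R_NormedModule)); apply continuous_zern_chord.
  - rewrite (zern_corr_eq_0 _ _ _ a Ha), (zern_corr_eq_0 _ _ _ b Hb).
    change minus with Cminus. ring.
Qed.

Lemma is_RInt_zern_chord n k w a b : (2 * k <= n)%nat ->
  chord_u w a = RtoC 0 -> chord_u w b = RtoC 0 ->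
  is_RInt (zern_chord n k w) a b
    (RtoC (/ INR (S n)) * (chord_a w a ^ S n - chord_a w b ^ S n))%C.
Proof.
  intros Hk Ha Hb. induction k as [|k IHk].
  - apply is_RInt_zern_chord_0.
  - apply (is_RInt_C_diff_0 (zern_chord n k w)); [apply IHk; lia|].
    apply is_RInt_zern_chord_diff; assumption.
Qed.

Lemma Cexpi_mult x y : (Cexpi x * Cexpi y)%C = Cexpi (x + y).
Proof. unfold Cexpi. rewrite cos_plus, sin_plus. apply injective_projections; simpl; ring. Qed.

Lemma Cexpi_pow x m : (Cexpi x ^ m)%C = Cexpi (INR m * x).
Proof.
  induction m as [|m IHm].
  - unfold Cexpi. rewrite Rmult_0_l, cos_0, sin_0. reflexivity.
  - rewrite Cpow_S, IHm, Cexpi_mult, S_INR. f_equal. ring.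
Qed.

Lemma Cexpi_conj x : Cconj (Cexpi x) = Cexpi (- x).
Proof. unfold Cexpi, Cconj. rewrite cos_neg, sin_neg. reflexivity. Qed.

Lemma Cexpi_mult_conj x : (Cexpi x * Cconj (Cexpi x))%C = RtoC 1.
Proof.
  unfold Cexpi. pose proof (sin2_cos2 x) as H. unfold Rsqr in H.
  apply injective_projections; simpl; [rewrite <- H|]; ring.
Qed.

Lemma chord_point_Cexpi beta phi l :
  ((cos beta - l * cos phi)%R, (sin beta - l * sin phi)%R)
  = (Cexpi phi * chord_a (Cexpi (beta - phi)) l)%C.
Proof.
  unfold Cexpi, chord_a. pose proof (sin2_cos2 phi) as H. unfold Rsqr in H.
  rewrite cos_minus, sin_minus.
  apply injective_projections; simpl.
  - transitivity (cos beta * (sin phi * sin phi + cos phi * cos phi) - l * cos phi);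
      [rewrite H|]; ring.
  - transitivity (sin beta * (sin phi * sin phi + cos phi * cos phi) - l * sin phi);
      [rewrite H|]; ring.
Qed.

Lemma chord_a_0 w : chord_a w 0 = w.
Proof. unfold chord_a. destruct w. apply injective_projections; simpl; ring. Qed.

Lemma chord_a_Cexpi_end t : chord_a (Cexpi t) (2 * cos t) = (- Cconj (Cexpi t))%C.
Proof. unfold chord_a, Cexpi. apply injective_projections; simpl; ring. Qed.

Lemma chord_u_Cexpi_0 t : chord_u (Cexpi t) 0 = RtoC 0.
Proof.
  unfold chord_u, chord_a, chord_b, Cexpi. pose proof (sin2_cos2 t) as H. unfold Rsqr in H.
  apply injective_projections; simpl; [rewrite <- H|]; ring.
Qed.

Lemma chord_u_Cexpi_end t : chord_u (Cexpi t) (2 * cos t) = RtoC 0.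
Proof.
  unfold chord_u, chord_a, chord_b, Cexpi. pose proof (sin2_cos2 t) as H. unfold Rsqr in H.
  apply injective_projections; simpl; [rewrite <- H|]; ring.
Qed.

Lemma pow_m1_even n : (-1) ^ n = if Nat.even n then 1 else -1.
Proof.
  induction n as [|n IHn]; [reflexivity|].
  change ((-1) ^ S n) with (-1 * (-1) ^ n). rewrite IHn, Nat.even_succ, <- Nat.negb_even.
  destruct (Nat.even n); simpl; ring.
Qed.

Definition fan_profile (n : nat) (t : R) : C :=
  if Nat.even n then RtoC (cos (INR (n + 1) * t))
  else Cmult Ci (RtoC (sin (INR (n + 1) * t))).

Lemma Cexpi_pow_sub_opp_conj n t :
  (Cexpi t ^ S n - (- Cconj (Cexpi t)) ^ S n)%C = (2 * fan_profile n t)%C.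
Proof.
  replace (- Cconj (Cexpi t))%C with (RtoC (-1) * Cconj (Cexpi t))%C
    by (apply injective_projections; simpl; ring).
  rewrite Cpow_mult_l, <- Cpow_conj, <- RtoC_pow, Cexpi_pow, Cexpi_conj, pow_m1_even.
  unfold fan_profile, Cexpi.
  rewrite Nat.add_1_r, Nat.even_succ, <- Nat.negb_even, cos_neg, sin_neg.
  destruct (Nat.even n); apply injective_projections; simpl; ring.
Qed.

Lemma fan_profile_conj n t : (RtoC ((-1) ^ n) * Cconj (fan_profile n t))%C = fan_profile n t.
Proof.
  unfold fan_profile. rewrite pow_m1_even.
  destruct (Nat.even n); apply injective_projections; simpl; ring.
Qed.

(** * Zernike polynomials on a chord *)

Lemma Zlow_chord n k E w l : (2 * k <= n)%nat -> (E * Cconj E)%C = RtoC 1 ->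
  Zlow n k (E * chord_a w l)%C = (E ^ (n - 2 * k) * zern_chord n k w l)%C.
Proof.
  intros Hk HE. unfold Zlow, zern_chord. rewrite <- Csum_mult_l. apply Csum_ext. intros s Hs.
  assert (Hu : (1 - E * chord_a w l * Cconj (E * chord_a w l))%C = chord_u w l).
  { unfold chord_u, chord_b, chord_a. rewrite Cmult_conj.
    transitivity (1 + E * Cconj E * ((w - l) * (l - Cconj w)))%C.
    - destruct w. apply injective_projections; simpl; ring.
    - rewrite HE. ring. }
  assert (Hb : (- Cconj (E * chord_a w l))%C = (Cconj E * chord_b w l)%C).
  { unfold chord_a, chord_b. rewrite Cmult_conj. destruct w, E.
    apply injective_projections; simpl; ring. }
  assert (HEk : (E ^ (k - s) * Cconj E ^ (k - s))%C = RtoC 1).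
  { rewrite <- Cpow_mult_l, HE. apply Cpow_1_l. }
  rewrite Hu, Hb, !Cpow_mult_l. unfold zern_term, chord_mono.
  replace (n - k - s)%nat with (n - 2 * k + (k - s))%nat by lia.
  rewrite !Cpow_add_r.
  transitivity (RtoC (binomR k s * binomR (n - k) s)
    * (E ^ (n - 2 * k) * (E ^ (k - s) * Cconj E ^ (k - s))
       * (chord_a w l ^ (n - 2 * k) * chord_a w l ^ (k - s) * chord_b w l ^ (k - s)
          * chord_u w l ^ s)))%C; [ring|].
  rewrite HEk. ring.
Qed.

Lemma INR_sub_double_IZR n k : (2 * k <= n)%nat ->
  INR (n - 2 * k) = IZR (Z.of_nat n - 2 * Z.of_nat k).
Proof. intros H. rewrite INR_IZR_INZ. f_equal. lia. Qed.

Lemma is_RInt_Zlow_chord n k beta phi : (2 * k <= n)%nat ->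
  is_RInt (fun l => Zlow n k ((cos beta - l * cos phi)%R, (sin beta - l * sin phi)%R))
    0 (2 * cos (beta - phi))
    (RtoC (2 / INR (n + 1)) * Cexpi (IZR (Z.of_nat n - 2 * Z.of_nat k) * phi)
     * fan_profile n (beta - phi))%C.
Proof.
  intros Hk. set (w := Cexpi (beta - phi)).
  eapply is_RInt_C_eq.
  - apply (is_RInt_ext (V := C_R_NormedModule)
      (fun l => Cexpi phi ^ (n - 2 * k) * zern_chord n k w l)%C).
    + intros l _.
      rewrite chord_point_Cexpi, Zlow_chord by (exact Hk || apply Cexpi_mult_conj).
      reflexivity.
    + apply is_RInt_Cmult_l, is_RInt_zern_chord;
        [exact Hk | apply chord_u_Cexpi_0 | apply chord_u_Cexpi_end].
  - unfold w. rewrite chord_a_0, chord_a_Cexpi_end, Cexpi_pow_sub_opp_conj, Cexpi_pow,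
      INR_sub_double_IZR, Nat.add_1_r by exact Hk.
    unfold Rdiv. rewrite RtoC_mult. ring.
Qed.

Lemma is_RInt_Zernike_chord n k beta phi : (k <= n)%nat ->
  is_RInt (fun l => Zernike n k ((cos beta - l * cos phi)%R, (sin beta - l * sin phi)%R))
    0 (2 * cos (beta - phi))
    (RtoC (2 / INR (n + 1)) * Cexpi (IZR (Z.of_nat n - 2 * Z.of_nat k) * phi)
     * fan_profile n (beta - phi))%C.
Proof.
  intros Hkn. unfold Zernike.
  pose proof (Nat.div2_odd n) as Hdiv. pose proof (Nat.b2n_le_1 (Nat.odd n)) as Hodd.
  destruct (Nat.leb_spec k (Nat.div2 n)) as [Hle | Hgt].
  - apply is_RInt_Zlow_chord. lia.
  - eapply is_RInt_C_eq.
    + apply is_RInt_Cmult_l, is_RInt_Cconj, is_RInt_Zlow_chord. lia.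
    + replace (IZR (Z.of_nat n - 2 * Z.of_nat (n - k)))
        with (- IZR (Z.of_nat n - 2 * Z.of_nat k)) by (rewrite <- opp_IZR; f_equal; lia).
      rewrite <- (fan_profile_conj n (beta - phi)) at 2.
      generalize (fan_profile n (beta - phi)). intros [p q].
      unfold Cexpi. rewrite <- Ropp_mult_distr_l, cos_neg, sin_neg.
      apply injective_projections; simpl; ring.
Qed.

Lemma fanD_is_RInt (a : C -> C) beta phi (I : C) :
  is_RInt (fun l => a ((cos beta - l * cos phi)%R, (sin beta - l * sin phi)%R))
    0 (2 * cos (beta - phi)) I ->
  fanD a beta phi = I.
Proof.
  intros H. unfold fanD, chord_int. destruct (Rle_dec 0 (cos (beta - phi))).
  - exact (is_RInt_unique (V := C_R_CompleteNormedModule) _ _ _ _ H).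
  - rewrite (is_RInt_unique (V := C_R_CompleteNormedModule) _ _ _ (Copp I)); [ring|].
    replace (2 * cos (beta - (phi + PI))) with (- (2 * cos (beta - phi))).
    2:{ replace (beta - (phi + PI)) with (beta - phi - PI) by ring.
        rewrite (cos_minus (beta - phi) PI), cos_PI, sin_PI. ring. }
    apply is_RInt_opp in H. rewrite <- Ropp_0 in H.
    rewrite <- (Ropp_involutive (2 * cos (beta - phi))) in H.
    apply is_RInt_comp_opp in H.
    eapply is_RInt_ext; [|exact H]. intros l _. rewrite neg_cos, neg_sin, opp_opp.
    f_equal. apply injective_projections; simpl; ring.
Qed.

Theorem theorem2 (n k : nat) (beta phi : R) :
  (k <= n)%nat ->
  0 <= beta < 2 * PI ->
  0 <= phi < 2 * PI ->
  fanD (Zernike n k) beta phi =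
  Cmult (Cmult (RtoC (2 / INR (n + 1)))
               (Cexpi (IZR (Z.of_nat n - 2 * Z.of_nat k) * phi)))
        (if Nat.even n then RtoC (cos (INR (n + 1) * (beta - phi)))
         else Cmult Ci (RtoC (sin (INR (n + 1) * (beta - phi))))).
Proof.
  intros Hkn _ _.
  apply fanD_is_RInt, (is_RInt_Zernike_chord n k beta phi Hkn).
Qed.
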